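(* Let $\{(n_i,\mathsf{G}_i)\}_{i\in I}$ be any family of pairs consisting of an integer $n_i\geq 1$ and a group $\mathsf{G}_i$, with $\mathsf{G}_i\not\cong\mathsf{G}_{i'}$ for $i\neq i'$. Let $\mathcal{G}_{\{(n_i,\mathsf{G}_i)\}_{i\in I}}=\coprod_{i\in I}\coprod^{n_i}\mathsf{G}_i$ (the coproduct of $n_i$ copies of the one-object groupoid $\mathsf{G}_i$, over all $i$). Then there is an isomorphism of 2-groups $$\mathbb{S}ym\big(\mathcal{G}_{\{(n_i,\mathsf{G}_i)\}_{i\in I}}\big)\;\cong\;\prod_{i\in I}\mathsf{S}_{n_i}\wr\wr\ \mathbb{S}ym(\mathsf{G}_i).$$
   Context: A 2-group is a monoidal groupoid $\mathbb{G}=(\mathcal{G},\otimes,e,a,l,r)$ (groupoid $\mathcal G$, tensor functor $\otimes$, unit object $e$, natural isomorphisms $a_{x,y,z}:x\otimes(y\otimes z)\to(x\otimes y)\otimes z$, $l_x:e\otimes x\to x$, $r_x:x\otimes e\to x$ satisfying pentagon and triangle axioms) in which every object $x$ has an object $x^*$ with $x\otimes x^*\cong e\cong x^*\otimes x$. Morphisms of 2-groups are strong monoidal functors; an isomorphism of 2-groups is a monoidal functor with a strict inverse monoidal functor. A group $\mathsf G$ is regarded as the one-object groupoid with morphisms the elements of $\mathsf G$. For a groupoid $\mathcal G$, $\mathbb{S}ym(\mathcal{G})$ is the 2-group whose objects are the self-equivalences (functors $\mathcal G\to\mathcal G$ that are equivalences) of $\mathcal G$, whose morphisms are natural isomorphisms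 between them, with tensor product given by composition of functors and horizontal composition of natural transformations and unit $id_{\mathcal G}$. The product $\prod_i\mathbb{G}_i$ of 2-groups is the product groupoid with tensor product, unit, associator and unitors defined componentwise. For a 2-group $\mathbb G$ and $n\ge1$, the wreath 2-product $\mathsf{S}_n\wr\wr\ \mathbb{G}$ is the 2-group whose objects are pairs $(\sigma,\mathbf{x})$ with $\sigma\in\mathsf S_n$ and $\mathbf x=(x_1,\dots,x_n)$ an $n$-tuple of objects of $\mathcal G$, whose morphisms $(\sigma,\mathbf x)\to(\sigma',\mathbf x')$ exist only if $\sigma=\sigma'$ and are the $n$-tuples $\mathbf f=(f_1,\dots,f_n)$ of morphisms $f_i:x_i\to x'_i$ (written $(id_\sigma,\mathbf f)$), composed componentwise, with tensor product $(\sigma,\mathbf{x})\otimes(\sigma',\mathbf{x}')=(\sigma\sigma',(\mathbf{x}\rhd\sigma')\otimes\mathbf{x}')$ and $(id_\sigma,\mathbf f)\otimes(id_{\sigma'},\mathbf f')=(id_{\sigma\sigma'},(\mathbf f\rhd\sigma')\otimes\mathbf f')$, where $\mathbf{x}\rhd\sigma:=(x_{\sigma(1)},\dots,x_{\sigma(n)})$ (similarly for tuples of morphisms) and $\otimes$ on $n$-tuples is componentwise; unit $(id,(e,\dots,e))$; associator $a_{(\sigma,\mathbf x),(\sigma',\mathbf x'),(\sigma'',\mathbf x'')}=(id_{\sigma\sigma'\sigma''},a_{\mathbf x\rhd(\sigma'\sigma''),\mathbf x'\rhd\sigma'',\mathbf x''})$ and unitors $l_{(\sigma,\mathbf x)}=(id_\sigma,l_{\mathbf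 x})$, $r_{(\sigma,\mathbf x)}=(id_\sigma,r_{\mathbf x})$, all computed componentwise in $\mathbb G$. *)

From Stdlib Require Import FunctionalExtensionality ProofIrrelevance.
From mathcomp Require Import all_boot all_fingroup.
Set Implicit Arguments. Unset Strict Implicit. Unset Printing Implicit Defensive.
Set Universe Polymorphism.

Record Grp := {
  gcar :> Type;
  gmul : gcar -> gcar -> gcar;
  gone : gcar;
  ginv : gcar -> gcar;
  gmulA : forall a b c, gmul a (gmul b c) = gmul (gmul a b) c;
  gmul1l : forall a, gmul gone a = a;
  gmul1r : forall a, gmul a gone = a;
  gmulVl : forall a, gmul (ginv a) a = gone;
  gmulVr : forall a, gmul a (ginv a) = gone }.
Arguments gmul {_} _ _.
Arguments gone {_}.
Arguments ginv {_} _.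

Definition group_iso (G H : Grp) : Prop :=
  exists f : G -> H, bijective f /\ forall a b : G, f (gmul a b) = gmul (f a) (f b).

Record Gpd := {
  ob : Type;
  hom : ob -> ob -> Type;
  comp : forall x y z : ob, hom y z -> hom x y -> hom x z;
  idm : forall x : ob, hom x x;
  inv : forall x y : ob, hom x y -> hom y x;
  compA : forall x y z w (h : hom z w) (g : hom y z) (f : hom x y),
      comp h (comp g f) = comp (comp h g) f;
  comp1l : forall x y (f : hom x y), comp (idm y) f = f;
  comp1r : forall x y (f : hom x y), comp f (idm x) = f;
  compVl : forall x y (f : hom x y), comp (inv f) f = idm x;
  compVr : forall x y (f : hom x y), comp f (inv f) = idm y }.
Arguments ob : clear implicits.
Arguments hom : clear implicits.
Arguments comp {_ _ _ _} _ _.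
Arguments idm {_} _.
Arguments inv {_ _ _} _.

Definition hcast (C : Gpd) (a b : ob C) (e : a = b) : hom C a b :=
  match e in (_ = b0) return hom C a b0 with erefl => idm a end.

Definition BG (G : Grp) : Gpd.
Proof.
refine {| ob := unit; hom := fun _ _ => gcar G;
          comp := fun _ _ _ g f => gmul g f; idm := fun _ => gone;
          inv := fun _ _ f => ginv f |}; intros.
- apply gmulA. - apply gmul1l. - apply gmul1r. - apply gmulVl. - apply gmulVr.
Defined.

(* Coproduct of the one-object groupoids BG_j, j : J : objects are the
   indices, morphisms j -> j' exist only if j = j' and are elements of G_j. *)
Record CopHom (J : Type) (G : J -> Grp) (x y : J) :=
  { ch_eq : x = y; ch_el : gcar (G x) }.

Lemma CopHom_ext J (G : J -> Grp) x y (f g : CopHom G x y) :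
  ch_el f = ch_el g -> f = g.
Proof.
destruct f as [e a], g as [e' b]; simpl; intros ->.
by rewrite (proof_irrelevance _ e e').
Qed.

Definition Gcop (J : Type) (G : J -> Grp) : Gpd.
Proof.
refine {| ob := J; hom := CopHom G;
  comp := fun x y z g f =>
    {| ch_eq := etrans (ch_eq f) (ch_eq g);
       ch_el := gmul (eq_rect_r (fun w => gcar (G w)) (ch_el g) (ch_eq f)) (ch_el f) |};
  idm := fun x => {| ch_eq := erefl x; ch_el := gone |};
  inv := fun x y f =>
    {| ch_eq := esym (ch_eq f);
       ch_el := eq_rect x (fun w => gcar (G w)) (ginv (ch_el f)) y (ch_eq f) |} |}.
- intros x y z w [e3 c] [e2 b] [e1 a]; subst; apply CopHom_ext; simpl; apply gmulA.
- intros x y [e a]; subst; apply CopHom_ext; simpl; apply gmul1l.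
- intros x y [e a]; subst; apply CopHom_ext; simpl; apply gmul1r.
- intros x y [e a]; subst; apply CopHom_ext; simpl; apply gmulVl.
- intros x y [e a]; subst; apply CopHom_ext; simpl; apply gmulVr.
Defined.

Record Functor (C D : Gpd) := {
  fobj : ob C -> ob D;
  fmap : forall x y, hom C x y -> hom D (fobj x) (fobj y);
  fmap_comp : forall x y z (g : hom C y z) (f : hom C x y),
      fmap (comp g f) = comp (fmap g) (fmap f);
  fmap_id : forall x, fmap (idm x) = idm (fobj x) }.
Arguments fobj {C D} _ _.
Arguments fmap {C D} _ {x y} _.

Definition Fid (C : Gpd) : Functor C C.
Proof.
refine {| fobj := fun x => x; fmap := fun _ _ f => f |}; by [].
Defined.

Definition Fcomp (C D E : Gpd) (G : Functor D E) (F : Functor C D) : Functor C E.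
Proof.
refine {| fobj := fun x => fobj G (fobj F x); fmap := fun _ _ f => fmap G (fmap F f) |}.
- by intros; rewrite !fmap_comp.
- by intros; rewrite !fmap_id.
Defined.

Record NatTrans (C D : Gpd) (F G : Functor C D) := {
  nt : forall x, hom D (fobj F x) (fobj G x);
  nt_nat : forall x y (f : hom C x y),
      comp (nt y) (fmap F f) = comp (fmap G f) (nt x) }.
Arguments nt {C D F G} _ _.

Lemma NatTrans_ext C D (F G : Functor C D) (a b : NatTrans F G) :
  (forall x, nt a x = nt b x) -> a = b.
Proof.
destruct a as [a Ha], b as [b Hb]; simpl; intros H.
have E := functional_extensionality_dep _ _ H; subst.
by rewrite (proof_irrelevance _ Ha Hb).
Qed.

(* a functor C -> C is an equivalence if it has a quasi-inverse
   (natural transformations in a groupoid are automatically isomorphisms) *)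
Definition is_equiv (C : Gpd) (F : Functor C C) : Prop :=
  exists G : Functor C C,
    inhabited (NatTrans (Fcomp G F) (Fid C)) /\ inhabited (NatTrans (Fcomp F G) (Fid C)).

Section SymGpd.
Variable C : Gpd.

Definition ntvcomp (F G H : Functor C C) (b : NatTrans G H) (a : NatTrans F G) :
  NatTrans F H.
Proof.
refine (@Build_NatTrans _ _ _ _ (fun x => comp (nt b x) (nt a x)) _).
intros x y f; rewrite -compA (nt_nat a) compA (nt_nat b) -compA; reflexivity.
Defined.

Definition ntid (F : Functor C C) : NatTrans F F.
Proof.
refine (@Build_NatTrans _ _ _ _ (fun x => idm (fobj F x)) _).
by intros; rewrite comp1l comp1r.
Defined.

Definition ntinv (F G : Functor C C) (a : NatTrans F G) : NatTrans G F.
Proof.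
refine (@Build_NatTrans _ _ _ _ (fun x => inv (nt a x)) _).
intros x y f.
rewrite -[comp (inv (nt a y)) _]comp1r -(compVr (nt a x)) !compA.
rewrite -(compA (inv (nt a y))) -(nt_nat a) compA compVl comp1l; reflexivity.
Defined.

Definition nthcomp (F G F' G' : Functor C C) (a : NatTrans F G) (b : NatTrans F' G') :
  NatTrans (Fcomp F F') (Fcomp G G').
Proof.
refine (@Build_NatTrans _ _ (Fcomp F F') (Fcomp G G') (fun x => comp (nt a (fobj G' x)) (fmap F (nt b x))) _).
intros x y f; simpl.
rewrite -compA -fmap_comp (nt_nat b) fmap_comp compA (nt_nat a) -compA; reflexivity.
Defined.

Lemma is_equiv_id : is_equiv (Fid C).
Proof. exists (Fid C); split; constructor; exact: ntid. Qed.

Lemma is_equiv_comp (F1 F2 : Functor C C) :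
  is_equiv F1 -> is_equiv F2 -> is_equiv (Fcomp F1 F2).
Proof.
move=> [G1 [[a1] [b1]]] [G2 [[a2] [b2]]].
exists (Fcomp G2 G1); split; constructor.
- refine (@Build_NatTrans _ _ (Fcomp (Fcomp G2 G1) (Fcomp F1 F2)) (Fid C) (fun x => comp (nt a2 x) (fmap G2 (nt a1 (fobj F2 x)))) _).
  intros x y f; simpl.
  rewrite -compA -fmap_comp.
  have := nt_nat a1 (fmap F2 f); simpl => ->.
  rewrite fmap_comp compA.
  have := nt_nat a2 f; simpl => ->.
  by rewrite -compA.
- refine (@Build_NatTrans _ _ (Fcomp (Fcomp F1 F2) (Fcomp G2 G1)) (Fid C) (fun x => comp (nt b1 x) (fmap F1 (nt b2 (fobj G1 x)))) _).
  intros x y f; simpl.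
  rewrite -compA -fmap_comp.
  have := nt_nat b2 (fmap G1 f); simpl => ->.
  rewrite fmap_comp compA.
  have := nt_nat b1 f; simpl => ->.
  by rewrite -compA.
Qed.

Definition SymOb := {F : Functor C C | is_equiv F}.

Definition Sym_gpd : Gpd.
Proof.
refine {| ob := SymOb; hom := fun F G => NatTrans (proj1_sig F) (proj1_sig G);
          comp := fun F G H b a => ntvcomp b a; idm := fun F => ntid (proj1_sig F);
          inv := fun F G a => ntinv a |}; intros; apply NatTrans_ext => ?; simpl.
- apply compA. - apply comp1l. - apply comp1r. - apply compVl. - apply compVr.
Defined.

End SymGpd.

Record MonGpd := {
  mgpd :> Gpd;
  tens : ob mgpd -> ob mgpd -> ob mgpd;
  tensm : forall x x' y y', hom mgpd x y -> hom mgpd x' y' -> hom mgpd (tens x x') (tens y y');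
  munit : ob mgpd;
  massoc : forall x y z, hom mgpd (tens x (tens y z)) (tens (tens x y) z);
  mlunit : forall x, hom mgpd (tens munit x) x;
  mrunit : forall x, hom mgpd (tens x munit) x }.
Arguments tens {_} _ _.
Arguments tensm {_ _ _ _ _} _ _.
Arguments munit : clear implicits.
Arguments massoc {_} _ _ _.
Arguments mlunit {_} _.
Arguments mrunit {_} _.

Definition SymGpd (C : Gpd) : MonGpd.
Proof.
refine {| mgpd := Sym_gpd C;
  tens := fun F G => exist _ (Fcomp (proj1_sig F) (proj1_sig G))
                       (is_equiv_comp (proj2_sig F) (proj2_sig G));
  tensm := fun F F' G G' a b => nthcomp a b;
  munit := exist _ (Fid C) (is_equiv_id C) |}.
- intros F G H.
  refine (@Build_NatTrans C C (Fcomp (proj1_sig F) (Fcomp (proj1_sig G) (proj1_sig H))) (Fcomp (Fcomp (proj1_sig F) (proj1_sig G)) (proj1_sig H)) (fun x => idm (fobj (proj1_sig F) (fobj (proj1_sig G) (fobj (proj1_sig H) x)))) _).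
  by intros; simpl; rewrite comp1l comp1r.
- intros F.
  refine (@Build_NatTrans C C (Fcomp (Fid C) (proj1_sig F)) (proj1_sig F) (fun x => idm (fobj (proj1_sig F) x)) _).
  by intros; simpl; rewrite comp1l comp1r.
- intros F.
  refine (@Build_NatTrans C C (Fcomp (proj1_sig F) (Fid C)) (proj1_sig F) (fun x => idm (fobj (proj1_sig F) x)) _).
  by intros; simpl; rewrite comp1l comp1r.
Defined.

(* Permutations are mathcomp's {perm 'I_n}; note that mathcomp's product
   (s * t)%g is "first s then t", so the paper's sigma sigma' (= sigma o sigma')
   is (sigma' * sigma)%g.  x |> sigma := (k |-> x (sigma k)).          *)
Section Wreath.
Variables (n : nat) (M : MonGpd).

Record WOb := { wperm : {perm 'I_n}; wtup : 'I_n -> ob M }.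
Record WHom (X Y : WOb) :=
  { wh_eq : wperm X = wperm Y; wh_f : forall k, hom M (wtup X k) (wtup Y k) }.

Lemma WHom_ext X Y (f g : WHom X Y) : (forall k, wh_f f k = wh_f g k) -> f = g.
Proof.
destruct f as [e a], g as [e' b]; simpl; intros H.
have E := functional_extensionality_dep _ _ H; subst.
by rewrite (proof_irrelevance _ e e').
Qed.

Definition Wreath_gpd : Gpd.
Proof.
refine {| ob := WOb; hom := WHom;
  comp := fun X Y Z g f => {| wh_eq := etrans (wh_eq f) (wh_eq g);
                              wh_f := fun k => comp (wh_f g k) (wh_f f k) |};
  idm := fun X => {| wh_eq := erefl (wperm X); wh_f := fun k => idm (wtup X k) |};
  inv := fun X Y f => {| wh_eq := esym (wh_eq f); wh_f := fun k => inv (wh_f f k) |} |};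
  intros; apply WHom_ext => ?; simpl.
- apply compA. - apply comp1l. - apply comp1r. - apply compVl. - apply compVr.
Defined.

(* (sigma, x) (x) (sigma', x') = (sigma sigma', (x |> sigma') (x) x') *)
Definition wtens (X Y : WOb) : WOb :=
  {| wperm := (wperm Y * wperm X)%g;
     wtup := fun k => tens (wtup X (wperm Y k)) (wtup Y k) |}.

Definition wtensm X X' Y Y' (f : WHom X Y) (g : WHom X' Y') :
  WHom (wtens X X') (wtens Y Y') :=
  @Build_WHom (wtens X X') (wtens Y Y') (f_equal2 (fun s t => (t * s)%g) (wh_eq f) (wh_eq g)) (fun k =>
       tensm (comp (hcast (f_equal (fun s : {perm 'I_n} => wtup Y (s k)) (wh_eq g)))
                   (wh_f f (wperm X' k)))
             (wh_f g k)).

Definition wunit : WOb := {| wperm := 1%g; wtup := fun _ => munit M |}.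

Definition wassoc (X Y Z : WOb) : WHom (wtens X (wtens Y Z)) (wtens (wtens X Y) Z) :=
  @Build_WHom (wtens X (wtens Y Z)) (wtens (wtens X Y) Z) (esym (mulgA (wperm Z) (wperm Y) (wperm X))) (fun k =>
       comp (tensm (tensm (hcast (f_equal (wtup X) (permM (wperm Z) (wperm Y) k)))
                          (idm (wtup Y (wperm Z k))))
                   (idm (wtup Z k)))
            (massoc (wtup X ((wperm Z * wperm Y)%g k)) (wtup Y (wperm Z k)) (wtup Z k))).

Definition wlunit (X : WOb) : WHom (wtens wunit X) X :=
  @Build_WHom (wtens wunit X) (X) (mulg1 (wperm X)) (fun k => mlunit (wtup X k)).

Definition wrunit (X : WOb) : WHom (wtens X wunit) X :=
  @Build_WHom (wtens X wunit) (X) (mul1g (wperm X)) (fun k => comp (hcast (f_equal (wtup X) (perm1 k)))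
                           (mrunit (wtup X ((1%g : {perm 'I_n}) k)))).

Definition Wreath : MonGpd :=
  {| mgpd := Wreath_gpd; tens := wtens; tensm := wtensm; munit := wunit;
     massoc := wassoc; mlunit := wlunit; mrunit := wrunit |}.

End Wreath.

Section Prod.
Variables (I : Type) (M : I -> MonGpd).

Definition Prod_gpd : Gpd.
Proof.
refine {| ob := forall i, ob (M i);
  hom := fun X Y => forall i, hom (M i) (X i) (Y i);
  comp := fun X Y Z g f i => comp (g i) (f i);
  idm := fun X i => idm (X i);
  inv := fun X Y f i => inv (f i) |};
  intros; apply functional_extensionality_dep => ?.
- apply compA. - apply comp1l. - apply comp1r. - apply compVl. - apply compVr.
Defined.

Definition Mprod : MonGpd :=
  {| mgpd := Prod_gpd;
     tens := fun X Y i => tens (X i) (Y i);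
     tensm := fun X X' Y Y' f g i => tensm (f i) (g i);
     munit := fun i => munit (M i);
     massoc := fun X Y Z i => massoc (X i) (Y i) (Z i);
     mlunit := fun X i => mlunit (X i);
     mrunit := fun X i => mrunit (X i) |}.
End Prod.

Record MonFunctor (A B : MonGpd) := {
  mf :> Functor A B;
  mf_phi : forall x y : ob A, hom B (tens (fobj mf x) (fobj mf y)) (fobj mf (tens x y));
  mf_phi0 : hom B (munit B) (fobj mf (munit A));
  mf_nat : forall x x' y y' (f : hom A x y) (g : hom A x' y'),
      comp (fmap mf (tensm f g)) (mf_phi x x')
      = comp (mf_phi y y') (tensm (fmap mf f) (fmap mf g));
  mf_assoc : forall x y z : ob A,
      comp (fmap mf (massoc x y z))
           (comp (mf_phi x (tens y z)) (tensm (idm (fobj mf x)) (mf_phi y z)))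
      = comp (mf_phi (tens x y) z)
             (comp (tensm (mf_phi x y) (idm (fobj mf z)))
                   (massoc (fobj mf x) (fobj mf y) (fobj mf z)));
  mf_lunit : forall x : ob A,
      comp (fmap mf (mlunit x))
           (comp (mf_phi (munit A) x) (tensm mf_phi0 (idm (fobj mf x))))
      = mlunit (fobj mf x);
  mf_runit : forall x : ob A,
      comp (fmap mf (mrunit x))
           (comp (mf_phi x (munit A)) (tensm (idm (fobj mf x)) mf_phi0))
      = mrunit (fobj mf x) }.

Definition iso_2group (A B : MonGpd) : Prop :=
  exists (F : MonFunctor A B) (G : MonFunctor B A),
    Fcomp (mf G) (mf F) = Fid A /\ Fcomp (mf F) (mf G) = Fid B.

Definition Gfam (I : Type) (n : I -> nat) (G : I -> Grp) : Gpd :=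
  Gcop (fun p : {i : I & 'I_(n i)} => G (projT1 p)).

(* A self-equivalence F of the coproduct acts, at each object x, by a group isomorphism
   from the group of x to the group of F x.  Since distinct blocks carry non-isomorphic
   groups, F maps every block to itself: within block i it permutes the n_i copies and
   acts on each copy by an automorphism of G_i, which is exactly an object of
   S_{n_i} wr wr Sym(G_i); natural transformations decompose componentwise in the same
   way.  Conversely such data assemble into a self-equivalence.  The two assignments are
   strict mutual inverses, and their monoidal structure maps have identity components,
   because composition of self-equivalences corresponds to the wreath tensor product. *)

From Stdlib Require Import FunctionalExtensionality ProofIrrelevance ClassicalEpsilon Classical.
From Pilot Require Import Defs.
From mathcomp Require Import all_boot all_fingroup.
Import Defs.
Set Implicit Arguments. Unset Strict Implicit. Unset Printing Implicit Defensive.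
Set Universe Polymorphism.

Section GroupoidFacts.
Variable C : Gpd.

Lemma hcast_id (a : ob C) (e : a = a) : hcast e = idm a.
Proof. by rewrite (proof_irrelevance _ e erefl). Qed.

Lemma conj_inj x y (a : hom C x y) (u v : hom C x x) :
  comp a (comp u (inv a)) = comp a (comp v (inv a)) -> u = v.
Proof.
have unconj w : comp (inv a) (comp (comp a (comp w (inv a))) a) = w.
  by rewrite -!compA compVl comp1r !compA compVl comp1l.
by move=> E; rewrite -(unconj u) E unconj.
Qed.

Lemma nat_to_id_conj (H : Functor C C) (a : NatTrans H (Fid C)) x y (f : hom C x y) :
  f = comp (nt a y) (comp (fmap H f) (inv (nt a x))).
Proof. by rewrite compA (nt_nat a f) /= -compA compVr comp1r. Qed.

Lemma equiv_fmap_bij (F : Functor C C) x :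
  is_equiv F -> bijective (fun h : hom C x x => fmap F h).
Proof.
move=> [F' [[a] [b]]].
exists (fun c => comp (nt a x) (comp (fmap F' c) (inv (nt a x)))) => [h|c] /=.
  exact: (esym (nat_to_id_conj a h)).
set h := comp _ _.
have E : fmap F' (fmap F h) = fmap F' c.
  by apply: (conj_inj (a := nt a x)); rewrite -(nat_to_id_conj a h).
by rewrite (nat_to_id_conj b (fmap F h)) (nat_to_id_conj b c) /= E.
Qed.

Lemma symob_eq (F F' : SymOb C) : proj1_sig F = proj1_sig F' -> F = F'.
Proof.
case: F => [F p]; case: F' => [F' p'] /= E; subst F'.
by rewrite (proof_irrelevance _ p p').
Qed.

Lemma nt_hcast (F F' : SymOb C) (e : F = F') x :
  nt (hcast (C := Sym_gpd C) e) x = hcast (f_equal (fun F : SymOb C => fobj (proj1_sig F) x) e).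
Proof. by destruct e. Qed.

End GroupoidFacts.

Lemma functor_ext (C D : Gpd) (F F' : Functor C D) (eo : forall x, fobj F x = fobj F' x) :
  (forall x y (f : hom C x y),
     fmap F' f = comp (hcast (eo y)) (comp (fmap F f) (hcast (esym (eo x))))) ->
  F = F'.
Proof.
case: F eo => [o m Hc Hi]; case: F' => [o' m' Hc' Hi'] /= eo.
have E : o = o' := functional_extensionality _ _ eo.
subst o' => Hm.
have E : m = m'.
  apply: functional_extensionality_dep => x; apply: functional_extensionality_dep => y.
  apply: functional_extensionality => f.
  by rewrite Hm !hcast_id comp1l comp1r.
subst m'; f_equal; apply: proof_irrelevance.
Qed.

Lemma hcast_prod (I : Type) (M : I -> MonGpd) (X Y : ob (Prod_gpd M)) (e : X = Y) i :
  hcast (C := Prod_gpd M) e i = hcast (C := M i) (f_equal (fun X => X i) e).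
Proof. by destruct e. Qed.

Lemma wh_f_hcast n (M : MonGpd) (X Y : WOb n M) (e : X = Y) k :
  wh_f (hcast (C := Wreath_gpd n M) e) k = hcast (C := M) (f_equal (fun W => wtup W k) e).
Proof. by destruct e. Qed.

Lemma wob_eta n (M : MonGpd) (X : WOb n M) : X = Build_WOb (wperm X) (wtup X).
Proof. by case: X. Qed.

Section GroupMorphisms.
Variable G : Grp.

Lemma gmul_cancel_l (a b c : G) : gmul a b = gmul a c -> b = c.
Proof. by move=> E; rewrite -(gmul1l b) -(gmulVl a) -gmulA E gmulA gmulVl gmul1l. Qed.

Lemma gmor1 (f : G -> G) : {morph f : a b / gmul a b} -> f gone = gone.
Proof.
move=> fM; apply: (@gmul_cancel_l (f gone)).
by rewrite gmul1r -fM gmul1r.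
Qed.

Lemma can_gmor (f g : G -> G) : {morph f : a b / gmul a b} ->
  cancel f g -> cancel g f -> {morph g : a b / gmul a b}.
Proof. by move=> fM fK gK a b; apply: (can_inj fK); rewrite fM !gK. Qed.

End GroupMorphisms.

Section OneObjectGroupoid.
Variable G : Grp.

Definition BG_functor (f : G -> G) (fM : {morph f : a b / gmul a b}) :
  Functor (BG G) (BG G).
Proof.
refine (@Build_Functor (BG G) (BG G) id (fun _ _ (a : G) => (f a : G)) _ _).
- by move=> x y z a b; exact: fM.
- by move=> x; exact: gmor1.
Defined.

Definition BG_nt (F F' : Functor (BG G) (BG G)) (c : G)
  (cF : forall a : G, gmul c (@fmap _ _ F tt tt a) = gmul (@fmap _ _ F' tt tt a) c) :
  NatTrans F F'.
Proof. by refine (@Build_NatTrans _ _ F F' (fun _ => c) _) => [] [] [] a; apply: cF. Defined.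

Lemma BG_functor_equiv (f : G -> G) (fM : {morph f : a b / gmul a b}) :
  bijective f -> is_equiv (BG_functor fM).
Proof.
case=> g fK gK; exists (BG_functor (can_gmor fM fK gK)).
by split; constructor; refine (@BG_nt _ _ gone _) => a /=; rewrite gmul1l gmul1r ?fK ?gK.
Qed.

Definition BG_symob (f : G -> G) (fM : {morph f : a b / gmul a b}) (fB : bijective f) :
  SymOb (BG G) := exist _ (BG_functor fM) (BG_functor_equiv fM fB).

Lemma hcast_BG (a b : unit) (e : a = b) : hcast (C := BG G) e = gone.
Proof. by destruct e. Qed.

Lemma nt_hcast_BG (F F' : SymOb (BG G)) (e : F = F') x :
  nt (hcast (C := Sym_gpd (BG G)) e) x = gone.
Proof. by destruct e. Qed.

Lemma BG_fmap_tt (F : Functor (BG G) (BG G)) (u v : unit) (a : G) :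
  @fmap _ _ F u v a = @fmap _ _ F tt tt a.
Proof. by case: u; case: v. Qed.

Lemma BG_nt_tt (F F' : Functor (BG G) (BG G)) (a : NatTrans F F') (u : unit) :
  nt a u = nt a tt.
Proof. by case: u. Qed.

Lemma BG_fmap1 (F : Functor (BG G) (BG G)) x y : @fmap _ _ F x y gone = gone.
Proof. by rewrite BG_fmap_tt; exact: (fmap_id F tt). Qed.

Lemma BG_functor_ext (F F' : Functor (BG G) (BG G)) :
  (forall a : G, @fmap _ _ F tt tt a = @fmap _ _ F' tt tt a) -> F = F'.
Proof.
move=> FF'; have eo x : fobj F x = fobj F' x by case: (fobj F x); case: (fobj F' x).
refine (@functor_ext _ _ F F' eo _) => - [] [] a /=.
by rewrite FF' !hcast_BG gmul1l gmul1r.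
Qed.

Lemma BG_fmap_bij (F : Functor (BG G) (BG G)) : is_equiv F -> bijective (@fmap _ _ F tt tt).
Proof. exact: equiv_fmap_bij. Qed.

End OneObjectGroupoid.

Ltac BG_tt := repeat match goal with
  | |- context[@fmap (BG ?M) (BG ?M) ?F ?u ?v ?a] =>
      tryif (constr_eq u tt; constr_eq v tt) then fail else rewrite (@BG_fmap_tt M F u v a)
  | |- context[@nt (BG ?M) (BG ?M) ?F ?F' ?a ?u] =>
      tryif constr_eq u tt then fail else rewrite (@BG_nt_tt M F F' a u)
  end.

Section Coproduct.
Variables (J : Type) (G : J -> Grp).
Local Notation C := (Gcop G).

Definition cop_hom (x : J) (a : G x) : hom C x x := @Build_CopHom J G x x (erefl x) a.

Lemma cop_hom_el x (h : hom C x x) : cop_hom (ch_el h) = h.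
Proof. exact: CopHom_ext. Qed.

Lemma ch_el_hcast (x y : J) (e : x = y) : ch_el (hcast (C := C) e) = gone.
Proof. by destruct e. Qed.

Definition fmap_el (F : Functor C C) x (a : G x) : G (fobj F x) := ch_el (fmap F (cop_hom a)).

Lemma ch_el_fmap (F : Functor C C) x y (f : hom C x y) : ch_el (fmap F f) = fmap_el F (ch_el f).
Proof. by case: f => e a; destruct e. Qed.

Lemma fmap_el_mul (F : Functor C C) x : {morph @fmap_el F x : a b / gmul a b}.
Proof.
move=> a b; rewrite /fmap_el.
have -> : cop_hom (gmul a b) = comp (cop_hom a) (cop_hom b) by [].
rewrite fmap_comp /=; set e := ch_eq _.
by rewrite (proof_irrelevance _ e erefl).
Qed.

Lemma fmap_el_bij (F : Functor C C) x : is_equiv F -> bijective (@fmap_el F x).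
Proof.
move=> /(@equiv_fmap_bij C F x) [g gK Kg].
by exists (fun c => ch_el (g (cop_hom c))) => a; rewrite /fmap_el cop_hom_el ?gK ?Kg.
Qed.

End Coproduct.

Section Cast.
Variables (I : Type) (G : I -> Grp).

Definition gcast (j i : I) (e : j = i) (c : G j) : G i := eq_rect j (fun k => gcar (G k)) c i e.

Lemma gcast_id i (e : i = i) c : gcast e c = c.
Proof. by rewrite (proof_irrelevance _ e erefl). Qed.

Lemma gcast_irr j i (e e' : j = i) c : gcast e c = gcast e' c.
Proof. by rewrite (proof_irrelevance _ e e'). Qed.

Lemma gcast_trans j k i (e1 : j = k) (e2 : k = i) c :
  gcast e2 (gcast e1 c) = gcast (etrans e1 e2) c.
Proof. by destruct e1, e2. Qed.

Lemma gcast_mul j i (e : j = i) : {morph gcast e : a b / gmul a b}.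
Proof. by destruct e. Qed.

Lemma gcast_one j i (e : j = i) : gcast e gone = gone.
Proof. by destruct e. Qed.

Lemma gcast_bij j i (e : j = i) : bijective (gcast e).
Proof. by destruct e; exists id. Qed.

Lemma gcast_dep (J : Type) (P : J -> I) (d : forall y, G (P y)) y y' (e : y = y') j
  (e1 : P y = j) (e2 : P y' = j) :
  gcast e1 (d y) = gcast e2 (d y').
Proof. by destruct e; exact: gcast_irr. Qed.

End Cast.

Ltac gcast_simpl := repeat match goal with
  | |- context[@gcast ?I ?G ?j ?i ?e ?c] => rewrite (@gcast_id I G i e c)
  | |- context[@gcast ?I ?G ?j ?i ?e gone] => rewrite (@gcast_one I G j i e)
  end.

Section BlockCoproduct.
Variables (I : Type) (n : I -> nat) (G : I -> Grp).
Local Notation J := {i : I & 'I_(n i)}.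
Local Notation C := (Gfam n G).

Lemma eq_rect_r_gcast (x y : J) (e : x = y) (c : G (projT1 y)) :
  eq_rect_r (fun w : J => gcar (G (projT1 w))) c e = gcast (f_equal (@projT1 _ _) (esym e)) c.
Proof. by destruct e. Qed.

Lemma ch_el_comp (x y z : J) (g : hom C y z) (f : hom C x y) :
  ch_el (comp g f) = gmul (gcast (f_equal (@projT1 _ _) (esym (ch_eq f))) (ch_el g)) (ch_el f).
Proof. by case: f => e a; destruct e. Qed.

Lemma existT_ord_eq (p : J) i (e : projT1 p = i) (o : 'I_(n i)) :
  val (projT2 p) = val o -> p = existT _ i o.
Proof. by case: p e => j q /= e; subst j => /val_inj ->. Qed.

Lemma ord_cast (j i : I) (e : j = i) (o : 'I_(n j)) : o < n i.
Proof. by subst. Qed.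

Lemma equiv_fobj_inj (F : Functor C C) : is_equiv F -> injective (fobj F).
Proof.
move=> [F' [[a] _]] x y e.
have ex := ch_eq (nt a x); have ey := ch_eq (nt a y); simpl in ex, ey.
by rewrite -ex -ey e.
Qed.

Definition cop_functor (s : forall i, {perm 'I_(n i)}) (h : forall x : J, G (projT1 x) -> G (projT1 x))
  (hM : forall x, {morph h x : a b / gmul a b}) : Functor C C.
Proof.
refine (@Build_Functor C C (fun x => existT _ (projT1 x) (s (projT1 x) (projT2 x)))
   (fun x y f => @Build_CopHom _ _ _ _
       (f_equal (fun x : J => existT (fun i => 'I_(n i)) (projT1 x) (s (projT1 x) (projT2 x))) (ch_eq f))
       (h x (ch_el f))) _ _).
- by move=> x y z [e2 b] [e1 a]; destruct e1, e2; apply: CopHom_ext => /=; exact: hM.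
- by move=> x; apply: CopHom_ext => /=; exact: gmor1.
Defined.

Lemma cop_functor_equiv s h hM : (forall x, bijective (h x)) -> is_equiv (@cop_functor s h hM).
Proof.
move=> hB.
have [g hK Kh] : exists2 g : forall x : J, G (projT1 x) -> G (projT1 x),
    forall x, cancel (h x) (g x) & forall x, cancel (g x) (h x).
  have /(_ _) /constructive_indefinite_description hg x :
      exists g, cancel (h x) g /\ cancel g (h x) by case: (hB x) => g; exists g.
  by exists (fun x => sval (hg x)) => x; case: (svalP (hg x)).
pose sV i := (s i)^-1%g.
pose hV (x : J) : G (projT1 x) -> G (projT1 x) := g (existT _ (projT1 x) (sV _ (projT2 x))).
have hVM x : {morph hV x : a b / gmul a b}.
  case: x => i k a b; rewrite /hV /=.
  exact: (can_gmor (hM (existT _ i (sV i k))) (hK _) (Kh _) a b).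
have sVs (x : J) : existT (fun i => 'I_(n i)) (projT1 x) (sV _ (s _ (projT2 x))) = x.
  by case: x => i k /=; rewrite permK.
have ssV (x : J) : existT (fun i => 'I_(n i)) (projT1 x) (s _ (sV _ (projT2 x))) = x.
  by case: x => i k /=; rewrite permKV.
exists (cop_functor sV hVM); split; constructor.
- refine (@Build_NatTrans C C (Fcomp (cop_functor sV hVM) (cop_functor s hM)) (Fid C)
    (fun x => @Build_CopHom _ _ _ _ (sVs x) gone) _).
  move=> x y [e a]; destruct e; destruct x as [i k]; apply: CopHom_ext.
  rewrite !ch_el_comp /=; gcast_simpl; rewrite gmul1l gmul1r /hV /=.
  by move: (hK (existT _ i (sV i (s i k)))); rewrite /sV permK => ->.
- refine (@Build_NatTrans C C (Fcomp (cop_functor s hM) (cop_functor sV hVM)) (Fid C)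
    (fun x => @Build_CopHom _ _ _ _ (ssV x) gone) _).
  move=> x y [e a]; destruct e; destruct x as [i k]; apply: CopHom_ext.
  by rewrite !ch_el_comp /=; gcast_simpl; rewrite gmul1l gmul1r /hV Kh.
Qed.

End BlockCoproduct.

Ltac cop_simpl := repeat (rewrite /= ?ch_el_comp ?eq_rect_r_gcast ?ch_el_fmap ?ch_el_hcast
  ?nt_hcast_BG ?BG_fmap1 ?gmul1l ?gmul1r /fmap_el /=; gcast_simpl; BG_tt).

Section WreathToSym.
Variables (I : Type) (n : I -> nat) (G : I -> Grp).
Local Notation J := {i : I & 'I_(n i)}.
Local Notation C := (Gfam n G).
Local Notation W := (Mprod (fun i => Wreath (n i) (SymGpd (BG (G i))))).

Definition wreath_aut (Y : ob W) (x : J) (a : G (projT1 x)) : G (projT1 x) :=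
  @fmap _ _ (proj1_sig (wtup (Y (projT1 x)) (projT2 x))) tt tt a.
Arguments wreath_aut Y x a : clear implicits.

Lemma wreath_aut_mul (Y : ob W) x : {morph wreath_aut Y x : a b / gmul a b}.
Proof. exact: (fmap_comp (proj1_sig (wtup (Y (projT1 x)) (projT2 x))) (x:=tt) (y:=tt) (z:=tt)). Qed.

Lemma wreath_aut_bij (Y : ob W) x : bijective (wreath_aut Y x).
Proof. exact: (BG_fmap_bij (proj2_sig (wtup (Y (projT1 x)) (projT2 x)))). Qed.

Definition sym_functor (Y : ob W) : Functor C C :=
  cop_functor (fun i => wperm (Y i)) (@wreath_aut_mul Y).

Definition sym_ob (Y : ob W) : SymOb C :=
  exist _ (sym_functor Y)
    (cop_functor_equiv (fun i => wperm (Y i)) (@wreath_aut_mul Y) (@wreath_aut_bij Y)).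

Definition sym_hom (Y Y' : ob W) (g : hom W Y Y') : NatTrans (sym_functor Y) (sym_functor Y').
Proof.
refine (@Build_NatTrans C C (sym_functor Y) (sym_functor Y')
  (fun x => @Build_CopHom _ _ _ _
     (f_equal (fun s : {perm 'I_(n (projT1 x))} => existT (fun i => 'I_(n i)) (projT1 x) (s (projT2 x)))
        (wh_eq (g (projT1 x))))
     (nt (wh_f (g (projT1 x)) (projT2 x)) tt)) _).
move=> x y [e a]; destruct e; apply: CopHom_ext.
rewrite !ch_el_comp /=; gcast_simpl.
exact: (nt_nat (wh_f (g (projT1 x)) (projT2 x)) (x:=tt) (y:=tt) a).
Defined.

Definition wreath_to_sym : Functor W (SymGpd C).
Proof.
refine (@Build_Functor W (SymGpd C) sym_ob (fun Y Y' g => sym_hom g) _ _).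
- move=> X Y Z g f; apply: NatTrans_ext => x; apply: CopHom_ext => /=.
  by rewrite eq_rect_r_gcast; gcast_simpl.
- by move=> X; apply: NatTrans_ext => x; apply: CopHom_ext.
Defined.

Definition same_ob_nt (F1 F2 : Functor C C) (E : forall x, fobj F1 x = fobj F2 x)
  (H : forall x (a : G (projT1 x)),
     gcast (f_equal (@projT1 _ _) (E x)) (fmap_el F1 a) = fmap_el F2 a) : NatTrans F1 F2.
Proof.
refine (@Build_NatTrans C C F1 F2 (fun x => @Build_CopHom _ _ _ _ (E x) gone) _).
move=> x y [e a]; destruct e; apply: CopHom_ext.
by rewrite !ch_el_comp !ch_el_fmap /= -(H x a) gcast_trans; gcast_simpl; rewrite gmul1l gmul1r.
Defined.

Lemma sym_functor_tens_ob (X Y : ob W) x :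
  fobj (Fcomp (sym_functor X) (sym_functor Y)) x = fobj (sym_functor (@tens W X Y)) x.
Proof. by rewrite /= permM. Qed.

Lemma sym_functor_unit_ob x : fobj (Fid C) x = fobj (sym_functor (munit W)) x.
Proof. by case: x => i k /=; rewrite perm1. Qed.

Definition wreath_to_sym_tens (X Y : ob W) :
  hom (SymGpd C) (@tens (SymGpd C) (sym_ob X) (sym_ob Y)) (sym_ob (@tens W X Y)).
Proof.
refine (@same_ob_nt (Fcomp (sym_functor X) (sym_functor Y)) (sym_functor (@tens W X Y)) (sym_functor_tens_ob X Y) _).
by move=> x a; gcast_simpl; rewrite /fmap_el /= /wreath_aut /=; BG_tt.
Defined.

Definition wreath_to_sym_unit : hom (SymGpd C) (munit (SymGpd C)) (sym_ob (munit W)).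
Proof.
refine (@same_ob_nt (Fid C) (sym_functor (munit W)) sym_functor_unit_ob _).
by move=> x a; gcast_simpl.
Defined.

Definition wreath_to_sym_mon : MonFunctor W (SymGpd C).
Proof.
refine (@Build_MonFunctor W (SymGpd C) wreath_to_sym wreath_to_sym_tens wreath_to_sym_unit _ _ _ _);
  try (move=> * ; apply: NatTrans_ext => x; apply: CopHom_ext; cop_simpl; rewrite /wreath_aut; cop_simpl; done).
move=> X X' Y Y' f g; apply: NatTrans_ext => x; apply: CopHom_ext; cop_simpl.
by rewrite /wreath_aut; cop_simpl; rewrite (wh_eq (g (projT1 x))).
Defined.
End WreathToSym.

Section SymToWreath.
Variables (I : Type) (n : I -> nat) (G : I -> Grp).
Hypothesis hG : forall i i' : I, i <> i' -> ~ group_iso (G i) (G i').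
Local Notation J := {i : I & 'I_(n i)}.
Local Notation C := (Gfam n G).
Local Notation W := (Mprod (fun i => Wreath (n i) (SymGpd (BG (G i))))).

(* [fmap_el F] at [x] is an isomorphism between the groups of the blocks of [x] and [F x],
   so the two blocks coincide. *)
Lemma equiv_fobj_block (F : Functor C C) : is_equiv F -> forall x, projT1 (fobj F x) = projT1 x.
Proof.
move=> Feq x; apply: NNPP => ne.
apply: (hG (i := projT1 x) (i' := projT1 (fobj F x))) => [e|]; first exact: ne.
exists (@fmap_el _ _ F x); split; [exact: fmap_el_bij | exact: fmap_el_mul].
Qed.

Definition block_perm_fun (F : SymOb C) i (k : 'I_(n i)) : 'I_(n i) :=
  Ordinal (ord_cast (equiv_fobj_block (proj2_sig F) (existT _ i k))
                    (projT2 (fobj (proj1_sig F) (existT _ i k)))).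

Lemma fobj_block_perm_fun (F : SymOb C) x :
  fobj (proj1_sig F) x = existT _ (projT1 x) (block_perm_fun F (projT2 x)).
Proof. by case: x => i k; exact: (existT_ord_eq (equiv_fobj_block (proj2_sig F) (existT _ i k))). Qed.

Lemma block_perm_fun_inj (F : SymOb C) i : injective (@block_perm_fun F i).
Proof.
move=> k1 k2 e.
have E : existT (fun i => 'I_(n i)) i k1 = existT _ i k2.
  by apply: (equiv_fobj_inj (proj2_sig F)); rewrite !fobj_block_perm_fun /= e.
by apply: val_inj; exact: (f_equal (fun p : J => nat_of_ord (projT2 p)) E).
Qed.

Definition block_perm (F : SymOb C) i : {perm 'I_(n i)} := perm (@block_perm_fun_inj F i).

Lemma fobj_block_perm (F : SymOb C) i k :
  fobj (proj1_sig F) (existT _ i k) = existT _ i (block_perm F i k).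
Proof. by rewrite fobj_block_perm_fun permE. Qed.

Definition block_aut (F : SymOb C) i (k : 'I_(n i)) (a : G i) : G i :=
  gcast (equiv_fobj_block (proj2_sig F) (existT _ i k)) (fmap_el (proj1_sig F) (x := existT _ i k) a).

Lemma block_aut_mul (F : SymOb C) i k : {morph @block_aut F i k : a b / gmul a b}.
Proof. by move=> a b; rewrite /block_aut fmap_el_mul gcast_mul. Qed.

Lemma block_aut_one (F : SymOb C) i k : block_aut F (i := i) k gone = gone.
Proof. exact: gmor1 (block_aut_mul F k). Qed.

Lemma block_aut_bij (F : SymOb C) i k : bijective (@block_aut F i k).
Proof. by apply: bij_comp; [exact: gcast_bij | apply: fmap_el_bij; exact: proj2_sig F]. Qed.

Definition wreath_ob (F : SymOb C) : ob W :=
  fun i => @Build_WOb (n i) (SymGpd (BG (G i))) (block_perm F i)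
             (fun k => BG_symob (@block_aut_mul F i k) (@block_aut_bij F i k)).

Definition wreath_hom (F F' : SymOb C) (al : NatTrans (proj1_sig F) (proj1_sig F')) :
  hom W (wreath_ob F) (wreath_ob F').
Proof.
move=> i.
refine (@Build_WHom (n i) (SymGpd (BG (G i))) (wreath_ob F i) (wreath_ob F' i) _
  (fun k => @BG_nt (G i) _ _
     (gcast (equiv_fobj_block (proj2_sig F) (existT _ i k)) (ch_el (nt al (existT _ i k)))) _)).
- apply/permP => k; rewrite /= !permE; apply: val_inj => /=.
  exact: (f_equal (fun p : J => nat_of_ord (projT2 p)) (ch_eq (nt al (existT _ i k)))).
- move=> a /=; rewrite /block_aut.
  have := f_equal (@ch_el _ _ _ _) (nt_nat al (cop_hom (G := fun p : J => G (projT1 p)) (x := existT _ i k) a)).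
  rewrite !ch_el_comp; gcast_simpl; rewrite -/(fmap_el _ _) -/(fmap_el _ _) => E.
  rewrite -gcast_mul E gcast_mul gcast_trans; congr (gmul _ _); exact: gcast_irr.
Defined.

Definition sym_to_wreath : Functor (SymGpd C) W.
Proof.
refine (@Build_Functor (SymGpd C) W wreath_ob (fun F F' al => wreath_hom al) _ _) => *;
  apply: functional_extensionality_dep => i; apply: WHom_ext => k; apply: NatTrans_ext => x /=.
- by rewrite eq_rect_r_gcast gcast_mul gcast_trans; congr (gmul _ _); exact: gcast_irr.
- exact: gcast_one.
Defined.

Lemma fmap_el_transport (F : Functor C C) y y' (e : y = y') (c : G (projT1 y)) j
  (e1 : projT1 (fobj F y) = j) (e2 : projT1 (fobj F y') = j) (e3 : projT1 y = projT1 y') :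
  gcast e1 (fmap_el F c) = gcast e2 (fmap_el F (gcast e3 c)).
Proof. by destruct e; rewrite gcast_id; exact: gcast_irr. Qed.

Definition sym_to_wreath_tens (F F' : SymOb C) :
  hom W (@tens W (wreath_ob F) (wreath_ob F')) (wreath_ob (@tens (SymGpd C) F F')).
Proof.
move=> i.
refine (@Build_WHom (n i) (SymGpd (BG (G i))) _ _ _ (fun k => @BG_nt (G i) _ _ gone _)).
- apply/permP => k; rewrite permM !permE; apply: val_inj => /=.
  by rewrite (fobj_block_perm F' k) permE.
- move=> a /=; rewrite gmul1l gmul1r /block_aut /fmap_el /=.
  rewrite (ch_el_fmap (sval F) (fmap (sval F') (cop_hom _))); symmetry.
  exact: (fmap_el_transport (fobj_block_perm F' k)).
Defined.

Definition sym_to_wreath_unit : hom W (munit W) (wreath_ob (munit (SymGpd C))).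
Proof.
move=> i.
refine (@Build_WHom (n i) (SymGpd (BG (G i))) _ _ _ (fun k => @BG_nt (G i) _ _ gone _)).
- by apply/permP => k; rewrite perm1 permE; exact: val_inj.
- by move=> a /=; rewrite gmul1l gmul1r /block_aut /fmap_el /=; gcast_simpl.
Defined.

Definition sym_to_wreath_mon : MonFunctor (SymGpd C) W.
Proof.
refine (@Build_MonFunctor (SymGpd C) W sym_to_wreath sym_to_wreath_tens sym_to_wreath_unit _ _ _ _);
  try (move=> *; apply: functional_extensionality_dep => i; apply: WHom_ext => k;
       apply: NatTrans_ext => x; cop_simpl; rewrite ?hcast_prod ?wh_f_hcast ?block_aut_one;
       cop_simpl; done).
move=> F F' H H' f g; apply: functional_extensionality_dep => i; apply: WHom_ext => k.
apply: NatTrans_ext => x; cop_simpl; rewrite gcast_mul gcast_trans; congr (gmul _ _).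
- apply: (gcast_dep (P := fun y => projT1 (fobj (sval F) y)) (fun y => ch_el (nt f y))).
  exact: (etrans (esym (ch_eq (nt g _))) (fobj_block_perm F' k)).
- by rewrite /block_aut; exact: (fmap_el_transport (F := sval F) (fobj_block_perm F' k)).
Defined.

End SymToWreath.

Section Inverse.
Variables (I : Type) (n : I -> nat) (G : I -> Grp).
Hypothesis hG : forall i i' : I, i <> i' -> ~ group_iso (G i) (G i').
Local Notation C := (Gfam n G).
Local Notation W := (Mprod (fun i => Wreath (n i) (SymGpd (BG (G i))))).

Lemma sym_ob_wreath_ob (F : SymOb C) : sym_ob (wreath_ob hG F) = F.
Proof.
apply: symob_eq => /=.
have eo x : fobj (sym_functor (wreath_ob hG F)) x = fobj (proj1_sig F) x.
  by rewrite fobj_block_perm_fun /= permE.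
apply: (@functor_ext _ _ (sym_functor (wreath_ob hG F)) (proj1_sig F) eo) => x y [e a]; destruct e; destruct x as [i k]; apply: CopHom_ext.
rewrite ch_el_fmap !ch_el_comp !ch_el_hcast gcast_one gmul1l gmul1r /=.
by rewrite /wreath_aut /= /block_aut gcast_trans; gcast_simpl.
Qed.

Lemma wreath_ob_sym_ob (Y : ob W) : wreath_ob hG (sym_ob Y) = Y.
Proof.
apply: functional_extensionality_dep => i.
rewrite [X in _ = X]wob_eta /wreath_ob; congr Build_WOb.
- by apply/permP => k; rewrite permE; exact: val_inj.
- apply: functional_extensionality => k; apply: symob_eq => /=.
  by apply: BG_functor_ext => a /=; rewrite /block_aut; gcast_simpl.
Qed.

Lemma wreath_to_symK : Fcomp (wreath_to_sym n G) (sym_to_wreath n hG) = Fid (SymGpd C).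
Proof.
refine (@functor_ext _ _ (Fcomp (wreath_to_sym n G) (sym_to_wreath n hG)) (Fid _)
  sym_ob_wreath_ob _) => F F' al.
apply: NatTrans_ext => - [i k]; rewrite /= !nt_hcast; apply: CopHom_ext.
by rewrite ?eq_rect_r_gcast !ch_el_hcast; gcast_simpl; rewrite ?gmul1l ?gmul1r gcast_trans; gcast_simpl.
Qed.

Lemma sym_to_wreathK : Fcomp (sym_to_wreath n hG) (wreath_to_sym n G) = Fid W.
Proof.
refine (@functor_ext _ _ (Fcomp (sym_to_wreath n hG) (wreath_to_sym n G)) (Fid _)
  wreath_ob_sym_ob _) => Y Y' g.
apply: functional_extensionality_dep => i; apply: WHom_ext => k; apply: NatTrans_ext => x /=.
by rewrite !hcast_prod !wh_f_hcast !nt_hcast_BG gmul1l gmul1r; gcast_simpl; case: x.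
Qed.

End Inverse.

Unset Universe Polymorphism.

Theorem theorem4p14 (I : Type) (n : I -> nat) (G : I -> Grp)
  (hn : forall i, 0 < n i)
  (hG : forall i i' : I, i <> i' -> ~ group_iso (G i) (G i')) :
  iso_2group (SymGpd (Gfam n G)) (Mprod (fun i => Wreath (n i) (SymGpd (BG (G i))))).
Proof.
exists (sym_to_wreath_mon n hG), (wreath_to_sym_mon n G).
split; [exact: wreath_to_symK | exact: sym_to_wreathK].
Qed.
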